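(* Let $n,\ell$ be positive integers with $\ell\mid n$, and let $p_0,\dots,p_{n/\ell-1}\in(0,1)$. Let $T$ be the runtime of the (1+1) EA on $\mathrm{BLO}_\ell$ using mutation rate $p_m$ whenever the current individual has fitness $m$. Then \[ \mathbb{E}[T]=\sum_{m=0}^{n/\ell-1}\frac{1}{(1-p_m)^{m\ell}}\sum_{j=1}^{\ell}\binom{\ell}{j}\frac{1}{1-(1-2p_m)^j}. \] In particular, for a static mutation rate $p\in(0,1)$ (i.e. $p_m=p$ for all $m$), \[ \mathbb{E}[T]=\frac{(1-p)^{-n+\ell}-(1-p)^{\ell}}{1-(1-p)^{\ell}}\sum_{j=1}^{\ell}\binom{\ell}{j}\frac{1}{1-(1-2p)^j}. \]
   Context: For positive integers $n,\ell$ with $\ell\mid n$, the BlockLeadingOnes function $\mathrm{BLO}_\ell:\{0,1\}^n\to\{0,\dots,n/\ell\}$ is $\mathrm{BLO}_\ell(x)=\sum_{m=1}^{n/\ell}\prod_{i=1}^{m\ell}x_i$, i.e. the number of leading blocks of $\ell$ consecutive bits that consist only of ones (equivalently $\lfloor \mathrm{LO}(x)/\ell\rfloor$ where $\mathrm{LO}(x)$ is the number of leading ones of $x$). The (1+1) EA: $x_0$ is uniform on $\{0,1\}^n$; in iteration $t=1,2,\dots$ an offspring $y$ is obtained from $x_{t-1}$ by flipping each bit independently with probability $q_t$, where $q_t=p_{\mathrm{BLO}_\ell(x_{t-1})}$ (fitness-dependent rate), and $x_t=y$ if $\mathrm{BLO}_\ell(y)\ge \mathrm{BLO}_\ell(x_{t-1})$,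 otherwise $x_t=x_{t-1}$. The runtime is $T=\min\{t\ge0:\mathrm{BLO}_\ell(x_t)=n/\ell\}$. *)

From HB Require Import structures.
From mathcomp Require Import all_boot all_order all_algebra.
From mathcomp Require Import reals ereal sequences.
Set Implicit Arguments. Unset Strict Implicit. Unset Printing Implicit Defensive.
Import Order.TTheory GRing.Theory Num.Theory.

Definition bits (n : nat) := {ffun 'I_n -> bool}.

(* BLO_l(x) = sum_{m=1}^{n/l} prod_{i=1}^{m l} x_i  (0-based indices here). *)
Definition BLO (n l : nat) (x : bits n) : nat :=
  (\sum_(1 <= m < (n %/ l).+1) [forall i : 'I_n, (i < m * l)%N ==> x i])%N.

Definition is_opt (n l : nat) (x : bits n) : bool := BLO l x == n %/ l.

Local Open Scope ring_scope.

Section EA.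
Variables (R : realType) (n l : nat) (p : nat -> R).

Definition mutprob (q : R) (x y : bits n) : R :=
  \prod_(i < n) (if x i == y i then 1 - q else q).

Definition ea_step (x z : bits n) : R :=
  \sum_(y : bits n) mutprob (p (BLO l x)) x y *
     ((if (BLO l x <= BLO l y)%N then y else x) == z)%:R.

(* alive t z = P(x_t = z and T > t), i.e. x_0,...,x_t all non-optimal *)
Fixpoint alive (t : nat) (z : bits n) : R :=
  if is_opt l z then 0 else
  match t with
  | 0 => (2 ^+ n)^-1
  | t'.+1 => \sum_(x : bits n) alive t' x * ea_step x z
  end.

Definition surv (t : nat) : R := \sum_(x : bits n) alive t x.

(* E[T] = sum_{t >= 0} P(T > t), in the extended reals *)
Definition expected_runtime : \bar R := (\sum_(t <oo) (surv t)%:E)%E.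
End EA.

(* A potential-function (drift) argument.  For block j < n/l and a nonempty
   set S of positions of block j, let chi_{j,S}(y) be the product of the signs
   (+1 for a one, -1 for a zero) of the bits of y at S, and put
     g(y) = sum_{j, S} c_{j,S} (1 - [first j blocks of y are full] chi_{j,S}(y)),
     c_{j,S} = 1 / ((1 - p_j)^{jl} (1 - (1 - 2 p_j)^{|S|})).
   Mutation with rate q keeps the first m blocks intact with probability
   (1 - q)^{ml} and multiplies chi_{m,S} by (1 - 2q)^{|S|} in expectation,
   and c_{j,S} is chosen so that one step from a non-optimal x of fitness m
   lowers g by exactly 1, except for the terms of blocks j > m.  Those terms are
   odd under flipping a bit of block j, a symmetry of the process below
   fitness j, so they cancel in G_t = E[g(x_t); T > t].  Hence
   G_{t+1} = G_t - P(T > t); as 0 <= G_t <= 2 G_0 P(T > t), G_t decays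
   geometrically and E[T] = G_0 = sum_{j,S} c_{j,S}, the nonconstant characters
   averaging to 0 under the uniform initial distribution. *)

From HB Require Import structures.
From mathcomp Require Import all_boot all_order all_algebra.
From mathcomp Require Import reals ereal sequences.
From mathcomp Require Import ring lra.
From mathcomp Require Import boolp topology normedtype.
Set Implicit Arguments. Unset Strict Implicit. Unset Printing Implicit Defensive.
Import Order.TTheory GRing.Theory Num.Theory.
Local Open Scope ring_scope.

Section BlockStructure.
Variables (n l : nat).
Hypotheses (l_gt0 : (0 < l)%N) (l_dvd_n : (l %| n)%N).
Local Notation k := (n %/ l)%N.
Local Notation L := (@BLO n l).

Definition full_blocks (a : nat) (x : bits n) : bool :=
  [forall i : 'I_n, (i < a * l)%N ==> x i].

Lemma full_blocksW a b x : (a <= b)%N -> full_blocks b x -> full_blocks a x.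
Proof.
move=> ab /forallP fullb; apply/forallP => i; apply/implyP => ia.
by apply: (implyP (fullb i)); apply: leq_trans ia _; rewrite leq_mul2r ab orbT.
Qed.

Lemma full_blocks0 x : full_blocks 0 x.
Proof. by apply/forallP => i; rewrite mul0n ltn0. Qed.

Lemma BLO_le x : (L x <= k)%N.
Proof.
rewrite /BLO; apply: (@leq_trans (\sum_(1 <= m < k.+1) 1)%N).
  by apply: leq_sum => m _; exact: leq_b1.
by rewrite sum_nat_const_nat muln1 subn1.
Qed.

Lemma leq_BLO a x : (a <= k)%N -> (a <= L x)%N = full_blocks a x.
Proof.
case: a => [|a] ak; first by rewrite leq0n full_blocks0.
have [full_a | not_full_a] := boolP (full_blocks a.+1 x).
  rewrite /BLO (big_cat_nat _ (n := a.+2)) //= (eq_big_nat _ _ (F2 := fun _ => 1%N)).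
    by rewrite sum_nat_const_nat muln1 subn1 leq_addr.
  by move=> m /andP[_]; rewrite ltnS => ma; rewrite -/(full_blocks m x) (full_blocksW ma full_a).
apply/negbTE; rewrite -ltnNge ltnS /BLO (big_cat_nat _ (n := a.+1)) //=; last first.
  by rewrite ltnS ltnW.
rewrite [X in (_ + X)%N]big_nat_cond [X in (_ + X)%N]big1 ?addn0; last first.
  move=> m /andP[/andP[am _] _]; apply/eqP; rewrite eqb0.
  by apply: contra not_full_a; exact: full_blocksW.
apply: (@leq_trans (\sum_(1 <= m < a.+1) 1)%N).
  by apply: leq_sum => m _; exact: leq_b1.
by rewrite sum_nat_const_nat muln1 subn1.
Qed.

Lemma is_optE x : is_opt l x = full_blocks k x.
Proof. by rewrite /is_opt eqn_leq BLO_le -leq_BLO. Qed.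

Lemma BLO_lt_notopt x : ~~ is_opt l x -> (L x < k)%N.
Proof. by rewrite /is_opt ltn_neqAle BLO_le andbT. Qed.

Definition flip_bit (i0 : 'I_n) (x : bits n) : bits n :=
  [ffun i => if i == i0 then ~~ x i else x i].

Lemma flip_bitK i0 : involutive (flip_bit i0).
Proof.
by move=> x; apply/ffunP => i; rewrite !ffunE; case: (i == i0); rewrite ?negbK.
Qed.

Lemma flip_bit_inj i0 : injective (flip_bit i0).
Proof. exact: inv_inj (flip_bitK i0). Qed.

Lemma sum_flip_bit_eq0 (R : numDomainType) (F : bits n -> R) (i0 : 'I_n) :
  (forall x, F (flip_bit i0 x) = - F x) -> \sum_(x : bits n) F x = 0.
Proof.
move=> FN; have E : \sum_(x : bits n) F x = - \sum_(x : bits n) F x.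
  rewrite [LHS](reindex_inj (flip_bit_inj (i0 := i0))) -sumrN.
  by apply: eq_bigr => x _; rewrite FN.
by apply/eqP; move/eqP: E; rewrite -subr_eq0 opprK -mulr2n mulrn_eq0.
Qed.

Lemma full_blocks_flip a (i0 : 'I_n) x :
  (a * l <= i0)%N -> full_blocks a (flip_bit i0 x) = full_blocks a x.
Proof.
move=> ai; apply: eq_forallb => i; rewrite ffunE.
by case: eqP => // ->; rewrite ltnNge ai.
Qed.

Lemma leq_BLO_flip a (i0 : 'I_n) x : (a <= k)%N -> (a * l <= i0)%N ->
  (a <= L (flip_bit i0 x))%N = (a <= L x)%N.
Proof. by move=> ak ai; rewrite !leq_BLO // full_blocks_flip. Qed.

Lemma BLO_flip (i0 : 'I_n) x : ((L x).+1 * l <= i0)%N -> L (flip_bit i0 x) = L x.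
Proof.
move=> i0_ge.
have Lk : (L x < k)%N.
  rewrite -(leq_pmul2r l_gt0) divnK //; exact: leq_trans i0_ge (ltnW (ltn_ord i0)).
have i0_ge' : (L x * l <= i0)%N by apply: leq_trans i0_ge; rewrite leq_mul2r leqnSn orbT.
apply/eqP; rewrite eqn_leq (leq_BLO_flip _ (ltnW Lk) i0_ge') leqnn andbT.
by rewrite leqNgt (leq_BLO_flip _ Lk i0_ge) ltnn.
Qed.

End BlockStructure.

Section Mutation.
Variables (R : realType) (n : nat).
Local Notation mut := (@mutprob R n).

Definition bitwt (q : R) (a b : bool) : R := if a == b then 1 - q else q.

Lemma mutprob_sum_prod q (x : bits n) (F : 'I_n -> bool -> R) :
  \sum_(y : bits n) mut q x y * \prod_(i < n) F i (y i) =
  \prod_(i < n) (bitwt q (x i) true * F i true + bitwt q (x i) false * F i false).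
Proof.
transitivity (\sum_(y : bits n) \prod_(i < n) (bitwt q (x i) (y i) * F i (y i))).
  by apply: eq_bigr => y _; rewrite /mutprob -big_split.
rewrite [RHS](eq_bigr (fun i => \sum_(b : bool) bitwt q (x i) b * F i b)).
  by rewrite bigA_distr_bigA.
by move=> i _; rewrite big_bool.
Qed.

Lemma mutprob_sum1 q x : \sum_(y : bits n) mut q x y = 1.
Proof.
transitivity (\sum_(y : bits n) mut q x y * \prod_(i < n) (1 : R)).
  by apply: eq_bigr => y _; rewrite big1 ?mulr1.
rewrite (mutprob_sum_prod q x (fun _ _ => 1)) big1 // => i _; rewrite /bitwt !mulr1.
by case: (x i); rewrite /= ?subrK // addrC subrK.
Qed.

Lemma mutprob_ge0 q x y : 0 <= q <= 1 -> 0 <= mut q x y.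
Proof.
by move=> /andP[q0 q1]; apply: prodr_ge0 => i _; case: eqP; rewrite ?subr_ge0.
Qed.

Lemma mutprob_flip q i0 x y : mut q (flip_bit i0 x) (flip_bit i0 y) = mut q x y.
Proof.
rewrite /mutprob; apply: eq_bigr => i _; rewrite !ffunE.
by case: (i == i0); rewrite ?(inj_eq negb_inj).
Qed.

End Mutation.

Section Runtime.
Variables (R : realType) (n l : nat) (p : nat -> R).
Hypotheses (n_gt0 : (0 < n)%N) (l_gt0 : (0 < l)%N) (l_dvd_n : (l %| n)%N).
Local Notation k := (n %/ l)%N.
Hypothesis p01 : forall m, (m < k)%N -> 0 < p m < 1.
Local Notation L := (@BLO n l).
Local Notation mut := (@mutprob R n).
Local Notation ea := (@ea_step R n l p).
Local Notation alive := (@alive R n l p).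

Lemma ea_step_eq0 x z : (L z < L x)%N -> ea x z = 0.
Proof.
move=> Lzx; rewrite /ea_step big1 // => y _.
case: eqP => [|_]; last by rewrite mulr0.
case: leqP => [Lxy yz|_ xz]; last by rewrite xz ltnn in Lzx.
by move: Lzx; rewrite -yz ltnNge Lxy.
Qed.

Lemma ea_step_ge0 x z : (L x < k)%N -> 0 <= ea x z.
Proof.
move=> Lxk; apply: sumr_ge0 => y _; rewrite mulr_ge0 ?ler0n // mutprob_ge0 //.
by case/andP: (p01 Lxk) => /ltW -> /ltW.
Qed.

Lemma ea_step_flip (i0 : 'I_n) x z : ((L x).+1 * l <= i0)%N ->
  ea (flip_bit i0 x) (flip_bit i0 z) = ea x z.
Proof.
move=> i0_ge; have i0_ge' : (L x * l <= i0)%N.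
  by apply: leq_trans i0_ge; rewrite leq_mul2r leqnSn orbT.
rewrite /ea_step BLO_flip // (reindex_inj (flip_bit_inj (i0 := i0))).
apply: eq_bigr => y _; rewrite mutprob_flip leq_BLO_flip ?BLO_le //.
by rewrite -(fun_if (flip_bit i0)) (inj_eq (flip_bit_inj (i0 := i0))).
Qed.

Lemma ea_step_expect (f : bits n -> R) x :
  \sum_(z : bits n) ea x z * f z =
  f x + \sum_(y : bits n) mut (p (L x)) x y * ((L x <= L y)%N%:R * (f y - f x)).
Proof.
transitivity (\sum_(y : bits n) mut (p (L x)) x y * f (if (L x <= L y)%N then y else x)).
  rewrite /ea_step; under eq_bigr => z _ do rewrite mulr_suml.
  rewrite exchange_big; apply: eq_bigr => y _.
  rewrite (bigD1 (if (L x <= L y)%N then y else x)) //= eqxx mulr1 big1 ?addr0 //.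
  by move=> z /negbTE; rewrite eq_sym => ->; rewrite mulr0 mul0r.
transitivity (\sum_(y : bits n) (mut (p (L x)) x y * f x +
    mut (p (L x)) x y * ((L x <= L y)%N%:R * (f y - f x)))).
  by apply: eq_bigr => y _; case: leqP => _ /=; ring.
by rewrite big_split /= -mulr_suml mutprob_sum1 mul1r.
Qed.

Lemma alive_opt t z : is_opt l z -> alive t z = 0.
Proof. by case: t => [|t] /= ->. Qed.

Lemma alive_ge0 t z : 0 <= alive t z.
Proof.
elim: t z => [|t IH] z /=; case: (is_opt l z); rewrite ?lexx //.
apply: sumr_ge0 => x _; have [/(alive_opt t) ->|x_nopt] := boolP (is_opt l x).
  by rewrite mul0r.
by rewrite mulr_ge0 // ea_step_ge0 // BLO_lt_notopt.
Qed.

Lemma alive_flip t z (i0 : 'I_n) : ((L z).+1 * l <= i0)%N ->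
  alive t (flip_bit i0 z) = alive t z.
Proof.
elim: t z => [|t IH] z i0_ge; rewrite /= /is_opt BLO_flip //; case: eqP => // _.
rewrite (reindex_inj (flip_bit_inj (i0 := i0))); apply: eq_bigr => x _.
have [Lxz|Lzx] := leqP (L x) (L z).
  have i0_ge_x : ((L x).+1 * l <= i0)%N.
    by apply: leq_trans i0_ge; rewrite leq_mul2r ltnS Lxz orbT.
  by rewrite IH // ea_step_flip.
by rewrite !ea_step_eq0 ?mulr0 // BLO_flip // leq_BLO_flip // (leq_trans Lzx) ?BLO_le.
Qed.

Local Notation full := (@full_blocks n l).

(* The default value is junk; it is only reached when [j >= k]. *)
Definition blockbit (j : nat) (i : 'I_l) : 'I_n :=
  insubd (Ordinal n_gt0) (j * l + i)%N.

Lemma val_blockbit j (i : 'I_l) : (j < k)%N -> val (blockbit j i) = (j * l + i)%N.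
Proof.
move=> jk; rewrite val_insubd ifT //; apply: leq_trans (_ : j.+1 * l <= n)%N.
  by rewrite mulSnr ltn_add2l.
by rewrite -[X in (_ <= X)%N](divnK l_dvd_n) leq_mul2r jk orbT.
Qed.

Lemma blockbit_inj j : (j < k)%N -> injective (blockbit j).
Proof. by move=> jk i i' /(congr1 val); rewrite !val_blockbit // => /addnI/val_inj. Qed.

Lemma blockbit_ge j (i : 'I_l) : (j < k)%N -> (j * l <= blockbit j i)%N.
Proof. by move=> jk; rewrite val_blockbit // leq_addr. Qed.

Lemma blockbit_lt j (i : 'I_l) : (j < k)%N -> (blockbit j i < j.+1 * l)%N.
Proof. by move=> jk; rewrite val_blockbit // mulSnr ltn_add2l. Qed.

Definition sgnb (b : bool) : R := if b then 1 else -1.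

Definition block_char (j : nat) (S : {set 'I_l}) (y : bits n) : R :=
  \prod_(i in S) sgnb (y (blockbit j i)).

Definition masked_char (j : nat) (S : {set 'I_l}) (y : bits n) : R :=
  (full j y)%:R * block_char j S y.

Lemma block_char0 j (y : bits n) : block_char j set0 y = 1.
Proof. by rewrite /block_char big_set0. Qed.

Lemma block_char_full j (S : {set 'I_l}) (y : bits n) :
  (j < k)%N -> full j.+1 y -> block_char j S y = 1.
Proof.
move=> jk /forallP full_y; rewrite /block_char big1 // => i _.
by move: (implyP (full_y (blockbit j i))); rewrite blockbit_lt // => /(_ isT) ->.
Qed.

Lemma block_char_flip j (S : {set 'I_l}) (y : bits n) (i : 'I_l) :
  (j < k)%N -> i \in S ->
  block_char j S (flip_bit (blockbit j i) y) = - block_char j S y.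
Proof.
move=> jk iS; rewrite /block_char (bigD1 i) //= [in RHS](bigD1 i) //= ffunE eqxx.
rewrite (eq_bigr (fun i' => sgnb (y (blockbit j i')))); last first.
  by move=> i' /andP[_ i'i]; rewrite ffunE (inj_eq (blockbit_inj jk)) (negbTE i'i).
by case: (y (blockbit j i)); rewrite /= !(mulN1r, mul1r, opprK).
Qed.

Lemma masked_char_bound j (S : {set 'I_l}) (y : bits n) : `|masked_char j S y| <= 1.
Proof.
rewrite normrM normr_prod big1 ?mulr1; last first.
  by move=> i _; case: (y _); rewrite /= ?normrN normr1.
by case: (full j y); rewrite ?normr1 ?normr0.
Qed.

Lemma sum_block_char_nonempty j (y : bits n) :
  (j < k)%N -> full j y -> ~~ full j.+1 y ->
  \sum_(S : {set 'I_l} | S != set0) block_char j S y = -1.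
Proof.
move=> jk full_j /forallPn[o]; rewrite negb_imply => /andP[o_lt y_o].
have o_ge : (j * l <= o)%N.
  rewrite leqNgt; apply: contra y_o => o_lt'.
  by move/forallP: full_j => /(_ o); rewrite o_lt'.
have o_in : (o - j * l < l)%N by rewrite ltn_subLR // -mulSnr.
have y_zero : y (blockbit j (Ordinal o_in)) = false.
  rewrite (_ : blockbit _ _ = o); first exact/negbTE.
  by apply: val_inj; rewrite val_blockbit //= subnKC.
have : \sum_(S : {set 'I_l}) block_char j S y =
        \prod_(i : 'I_l) (sgnb (y (blockbit j i)) + 1).
  by rewrite bigA_distr; apply: eq_bigr => S _; rewrite /block_char big_mkcond.
rewrite (bigD1 set0) //= block_char0 (bigD1 (Ordinal o_in)) //= y_zero /= addNr mul0r.
by move/eqP; rewrite addrC addr_eq0 => /eqP.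
Qed.

Lemma mutprob_masked_char q (x : bits n) m (S : {set 'I_l}) :
  (m < k)%N -> full m x ->
  \sum_(y : bits n) mut q x y * masked_char m S y =
  (1 - q) ^+ (m * l) * (1 - 2 * q) ^+ #|S| * block_char m S x.
Proof.
move=> mk full_x; pose B := blockbit m @: S.
have B_ge o : o \in B -> (m * l <= o)%N by case/imsetP => i _ ->; apply: blockbit_ge.
have fullE y : (full m y)%:R = \prod_(o < n) (if (o < m * l)%N then (y o)%:R else 1) :> R.
  have [full_y|/forallPn[o]] := boolP (full m y).
    rewrite big1 // => o _; case: ifP => // ol.
    by move/forallP: full_y => /(_ o); rewrite ol /= => ->.
  rewrite negb_imply => /andP[ol /negbTE y_o].
  by rewrite (bigD1 o) //= ol y_o mul0r.
have charE y : block_char m S y = \prod_(o < n) (if o \in B then sgnb (y o) else 1).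
  by rewrite -big_mkcond big_imset //= => i i' _ _; apply: blockbit_inj.
under eq_bigr => y _ do rewrite /masked_char fullE charE -big_split.
rewrite (mutprob_sum_prod q x (fun (o : 'I_n) b => (if (o < m * l)%N then b%:R else 1) *
                                      (if o \in B then sgnb b else 1))).
rewrite (eq_bigr (fun o : 'I_n => (if (o < m * l)%N then 1 - q else 1) *
                           (if o \in B then (1 - 2 * q) * sgnb (x o) else 1))); last first.
  move=> o _; case: ifP => ol.
    have -> : o \in B = false by apply/negP => /B_ge; rewrite leqNgt ol.
    by move/forallP: full_x => /(_ o); rewrite ol /= => ->; rewrite /bitwt /=; ring.
  by case: ifP => _; rewrite /bitwt /sgnb; case: (x o) => /=; ring.
rewrite big_split /= -mulrA; congr (_ * _).
  rewrite -big_mkcond /= -(big_ord_widen _ (fun=> 1 - q)) ?prodr_const ?card_ord //.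
  by rewrite -[X in (_ <= X)%N](divnK l_dvd_n) leq_mul2r ltnW ?orbT.
by rewrite -big_mkcond prodrMl (card_imset _ (blockbit_inj mk)) charE -big_mkcond.
Qed.

Definition keep_prob (m : nat) : R := (1 - p m) ^+ (m * l).
Definition lam (m : nat) : R := 1 - 2 * p m.
Definition coef (j : nat) (S : {set 'I_l}) : R := (keep_prob j)^-1 / (1 - lam j ^+ #|S|).

Definition potential (y : bits n) : R :=
  \sum_(j < k) \sum_(S : {set 'I_l} | S != set0) coef j S * (1 - masked_char j S y).

Definition total_coef : R := \sum_(j < k) \sum_(S : {set 'I_l} | S != set0) coef j S.

Definition step_masked_char (x : bits n) (j : nat) (S : {set 'I_l}) : R :=
  \sum_(y : bits n) mut (p (L x)) x y * masked_char j S y.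

Lemma keep_prob_gt0 j : (j < k)%N -> 0 < keep_prob j.
Proof. by move=> jk; case/andP: (p01 jk) => _ p1; rewrite exprn_gt0 // subr_gt0. Qed.

Lemma lam_expr_lt1 j d : (j < k)%N -> (0 < d)%N -> lam j ^+ d < 1.
Proof.
move=> jk d0; apply: ltr_normlW; rewrite normrX expr_lt1 // ltr_norml /lam.
by case/andP: (p01 jk) => p0 p1; apply/andP; split; lra.
Qed.

Lemma coef_gt0 j (S : {set 'I_l}) : (j < k)%N -> S != set0 -> 0 < coef j S.
Proof.
move=> jk S0; rewrite divr_gt0 ?invr_gt0 ?keep_prob_gt0 //.
by rewrite subr_gt0 lam_expr_lt1 // card_gt0.
Qed.

Lemma total_coef_ge0 : 0 <= total_coef.
Proof. by do 2![apply: sumr_ge0 => ? ?]; exact/ltW/coef_gt0. Qed.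

Lemma potential_ge0 y : 0 <= potential y.
Proof.
apply: sumr_ge0 => j _; apply: sumr_ge0 => S S0.
apply: mulr_ge0; first exact/ltW/coef_gt0.
by rewrite subr_ge0 (le_trans (ler_norm _) (masked_char_bound _ _ _)).
Qed.

Lemma potential_le y : potential y <= 2 * total_coef.
Proof.
rewrite /total_coef !mulr_sumr; apply: ler_sum => j _.
rewrite mulr_sumr; apply: ler_sum => S S0.
have := coef_gt0 (ltn_ord j) S0; move: (masked_char_bound j S y).
rewrite ler_norml => /andP[h1 h2] c0; nra.
Qed.

Lemma potential_opt y : is_opt l y -> potential y = 0.
Proof.
rewrite is_optE => full_y; rewrite /potential big1 // => j _; rewrite big1 // => S _.
rewrite /masked_char (full_blocksW (ltnW (ltn_ord j)) full_y) block_char_full //=.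
  by rewrite mulr1 subrr mulr0.
exact: full_blocksW (ltn_ord j) full_y.
Qed.

Lemma masked_char_drift x j (S : {set 'I_l}) : ~~ is_opt l x -> (j < k)%N ->
  \sum_(y : bits n) mut (p (L x)) x y *
      ((L x <= L y)%N%:R * (masked_char j S x - masked_char j S y)) =
  if (j < L x)%N then 0
  else if j == L x then keep_prob j * (1 - lam j ^+ #|S|) * block_char j S x
  else - step_masked_char x j S.
Proof.
move=> x_nopt jk; have Lxk := BLO_lt_notopt x_nopt.
have full_x : full (L x) x by rewrite -leq_BLO // ltnW.
have notfull_x : ~~ full (L x).+1 x by rewrite -leq_BLO // ltnn.
under eq_bigr => y _ do rewrite leq_BLO ?(ltnW Lxk) //.
case: ltngtP => [jLx|Lxj|->].
- rewrite big1 // => y _; have full_j z : full (L x) z -> full j.+1 z by exact: full_blocksW.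
  have [full_y|] := boolP (full (L x) y); last by rewrite mul0r mulr0.
  rewrite /masked_char !(full_blocksW (ltnW jLx)) // !block_char_full ?full_j //.
  by rewrite subrr !mulr0.
- have -> : masked_char j S x = 0.
    rewrite /masked_char (_ : full j x = false) ?mul0r //.
    by apply: contraNF notfull_x; exact: full_blocksW.
  rewrite /step_masked_char -sumrN; apply: eq_bigr => y _.
  have [full_y|/negbTE not_full_y] := boolP (full j y).
    by rewrite (full_blocksW (ltnW Lxj) full_y) sub0r mul1r mulrN.
  by rewrite /masked_char not_full_y /=; ring.
- set m := L x in Lxk full_x notfull_x *.
  transitivity (\sum_(y : bits n) (mut (p m) x y * masked_char m set0 y * block_char m S x -
                                   mut (p m) x y * masked_char m S y)).
    apply: eq_bigr => y _; rewrite /masked_char block_char0 full_x.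
    by case: (full m y) => /=; ring.
  rewrite sumrB -mulr_suml !mutprob_masked_char // cards0 block_char0.
  by rewrite /keep_prob /lam; ring.
Qed.

Lemma potential_drift x : ~~ is_opt l x ->
  \sum_(z : bits n) ea x z * potential z = potential x - 1 -
    \sum_(j < k | (L x < j)%N) \sum_(S : {set 'I_l} | S != set0)
       coef j S * step_masked_char x j S.
Proof.
move=> x_nopt; have Lxk := BLO_lt_notopt x_nopt.
have full_x : full (L x) x by rewrite -leq_BLO // ltnW.
have notfull_x : ~~ full (L x).+1 x by rewrite -leq_BLO // ltnn.
rewrite ea_step_expect -addrA; congr (_ + _).
transitivity (\sum_(j < k) \sum_(S : {set 'I_l} | S != set0) coef j S *
  \sum_(y : bits n) mut (p (L x)) x y *
     ((L x <= L y)%N%:R * (masked_char j S x - masked_char j S y))).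
  under eq_bigr => y _ do rewrite /potential -sumrB !mulr_sumr.
  rewrite exchange_big; apply: eq_bigr => j _.
  under eq_bigr => y _ do rewrite -sumrB !mulr_sumr.
  rewrite exchange_big; apply: eq_bigr => S _; rewrite mulr_sumr.
  by apply: eq_bigr => y _; ring.
under eq_bigr => j _ do under eq_bigr => S _ do rewrite masked_char_drift //.
rewrite (bigD1 (Ordinal Lxk)) //= ltnn eqxx.
have -> : \sum_(S : {set 'I_l} | S != set0)
    coef (L x) S * (keep_prob (L x) * (1 - lam (L x) ^+ #|S|) * block_char (L x) S x) = -1.
  rewrite -(sum_block_char_nonempty Lxk full_x notfull_x); apply: eq_bigr => S S0.
  have keep_neq0 : keep_prob (L x) != 0 by rewrite gt_eqF ?keep_prob_gt0.
  have lam_neq1 : 1 - lam (L x) ^+ #|S| != 0.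
    by rewrite gt_eqF // subr_gt0 lam_expr_lt1 // card_gt0.
  by rewrite /coef; field; rewrite keep_neq0 lam_neq1.
rewrite -sumrN; congr (_ + _).
rewrite (bigID (fun j : 'I_k => (L x < j)%N)) /= addrC big1 ?add0r; last first.
  move=> j /andP[/eqP j_ne]; rewrite -leqNgt leq_eqVlt => /orP[/eqP j_eq|->].
    by case: j_ne; apply: val_inj.
  by rewrite big1 // => S _; rewrite mulr0.
apply: eq_big => [j|j /andP[_ Lxj]].
  case: ltnP => Lxj; rewrite ?andbF ?andbT //.
  by apply: (contraTneq _ Lxj) => ->; rewrite ltnn.
rewrite -sumrN; apply: eq_bigr => S _.
by rewrite ltnNge (ltnW Lxj) /= gtn_eqF // mulrN.
Qed.

Lemma step_masked_char_flip (x : bits n) j (S : {set 'I_l}) (i : 'I_l) :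
  (j < k)%N -> i \in S -> (L x < j)%N ->
  step_masked_char (flip_bit (blockbit j i) x) j S = - step_masked_char x j S.
Proof.
move=> jk iS Lxj; have bit_ge : ((L x).+1 * l <= blockbit j i)%N.
  by apply: leq_trans (blockbit_ge _ jk); rewrite leq_mul2r Lxj orbT.
rewrite /step_masked_char BLO_flip // (reindex_inj (flip_bit_inj (i0 := blockbit j i))).
rewrite -sumrN; apply: eq_bigr => y _.
by rewrite mutprob_flip /masked_char full_blocks_flip ?blockbit_ge // block_char_flip // !mulrN.
Qed.

Lemma alive_step_masked_char_eq0 t j (S : {set 'I_l}) : (j < k)%N -> S != set0 ->
  \sum_(x : bits n) alive t x * (if (L x < j)%N then step_masked_char x j S else 0) = 0.
Proof.
move=> jk /set0Pn[i iS]; apply: (sum_flip_bit_eq0 (i0 := blockbit j i)) => x.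
have jl_le := blockbit_ge i jk.
rewrite !ltnNge (leq_BLO_flip _ (ltnW jk) jl_le) -!ltnNge.
case: ifP => Lxj; last by rewrite !mulr0 oppr0.
have bit_ge : ((L x).+1 * l <= blockbit j i)%N.
  by apply: leq_trans jl_le; rewrite leq_mul2r Lxj orbT.
by rewrite alive_flip // step_masked_char_flip // mulrN.
Qed.

Definition potential_mass (t : nat) : R := \sum_(x : bits n) alive t x * potential x.

Lemma potential_mass_step t : potential_mass t.+1 = potential_mass t - surv n l p t.
Proof.
rewrite /potential_mass /surv.
transitivity (\sum_(z : bits n) (\sum_(x : bits n) alive t x * ea x z) * potential z).
  by apply: eq_bigr => z _ /=; case: ifP => // /potential_opt ->; rewrite !mulr0.
under eq_bigr => z _ do rewrite mulr_suml.
rewrite exchange_big.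
transitivity (\sum_(x : bits n) (alive t x * potential x - alive t x -
   \sum_(j < k) \sum_(S : {set 'I_l} | S != set0)
      coef j S * (alive t x * (if (L x < j)%N then step_masked_char x j S else 0)))).
  apply: eq_bigr => x _.
  under eq_bigr => z _ do rewrite -mulrA.
  rewrite -mulr_sumr; have [x_opt|x_nopt] := boolP (is_opt l x).
    rewrite alive_opt // !mul0r subrr sub0r big1 ?oppr0 // => j _.
    by rewrite big1 // => S _; rewrite mul0r mulr0.
  rewrite potential_drift // !mulrBr mulr1; congr (_ - _).
  rewrite big_mkcond mulr_sumr; apply: eq_bigr => j _.
  case: ifP => _; last by rewrite mulr0 big1 // => S _; rewrite !mulr0.
  by rewrite mulr_sumr; apply: eq_bigr => S _; ring.
rewrite !sumrB [X in _ - X]exchange_big [X in _ - X]big1 ?subr0 // => j _.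
rewrite exchange_big big1 // => S S0.
by rewrite -mulr_sumr alive_step_masked_char_eq0 // mulr0.
Qed.

Lemma potential_mass_ge0 t : 0 <= potential_mass t.
Proof. by apply: sumr_ge0 => x _; rewrite mulr_ge0 ?alive_ge0 ?potential_ge0. Qed.

Lemma potential_mass_le t : potential_mass t <= 2 * total_coef * surv n l p t.
Proof.
rewrite /potential_mass /surv mulr_sumr; apply: ler_sum => x _.
by rewrite mulrC ler_wpM2r ?alive_ge0 ?potential_le.
Qed.

Lemma sum_masked_char_eq0 j (S : {set 'I_l}) : (j < k)%N -> S != set0 ->
  \sum_(x : bits n) masked_char j S x = 0.
Proof.
move=> jk /set0Pn[i iS]; apply: (sum_flip_bit_eq0 (i0 := blockbit j i)) => x.
by rewrite /masked_char full_blocks_flip ?blockbit_ge // block_char_flip // mulrN.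
Qed.

Lemma potential_mass0 : potential_mass 0 = total_coef.
Proof.
rewrite /potential_mass.
transitivity ((2 ^+ n)^-1 * \sum_(x : bits n) potential x).
  by rewrite mulr_sumr; apply: eq_bigr => x _ /=; case: ifP => // /potential_opt ->; rewrite !mulr0.
have -> : \sum_(x : bits n) potential x = 2 ^+ n * total_coef.
  rewrite /potential exchange_big /total_coef mulr_sumr; apply: eq_bigr => j _.
  rewrite exchange_big mulr_sumr; apply: eq_bigr => S S0.
  rewrite -mulr_sumr sumrB sum_masked_char_eq0 // subr0 sumr_const.
  by rewrite card_ffun card_bool card_ord natrX mulrC.
by rewrite mulKf // expf_neq0 // pnatr_eq0.
Qed.


End Runtime.

Lemma sum_nonempty_sets_card (R : pzSemiRingType) (l : nat) (F : nat -> R) :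
  \sum_(S : {set 'I_l} | S != set0) F #|S| = \sum_(1 <= i < l.+1) 'C(l, i)%:R * F i.
Proof.
transitivity (\sum_(S : {set 'I_l}) (if #|S| == 0%N then 0 else F #|S|)).
  by rewrite big_mkcond; apply: eq_bigr => S _; rewrite cards_eq0; case: (S == set0).
rewrite (partition_big (fun S : {set 'I_l} => (inord #|S| : 'I_l.+1)) xpredT) //=.
transitivity (\sum_(i < l.+1) (if i == 0%N :> nat then 0 else 'C(l, i)%:R * F i)).
  apply: eq_bigr => i _.
  have card_lt (S : {set 'I_l}) : (#|S| < l.+1)%N.
    by rewrite ltnS -[X in (_ <= X)%N](card_ord l) max_card.
  rewrite (eq_bigr (fun _ => if i == 0%N :> nat then 0 else F i)); last first.
    by move=> S /eqP <-; rewrite inordK.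
  case: eqP => _; first by rewrite big1.
  rewrite (eq_bigl (fun S => S \in [set S : {set 'I_l} | #|S| == i])); last first.
    by move=> S; rewrite !inE -(inj_eq val_inj) /= inordK.
  by rewrite sumr_const card_draws card_ord mulr_natl.
by rewrite big_ord_recl /= add0r big_add1 big_mkord.
Qed.

Lemma total_coefE (R : realType) (n l : nat) (p : nat -> R) :
  total_coef n l p = \sum_(m < n %/ l) ((1 - p m) ^+ (m * l))^-1 *
         \sum_(1 <= j < l.+1) 'C(l, j)%:R / (1 - (1 - 2 * p m) ^+ j).
Proof.
apply: eq_bigr => m _; rewrite /coef -mulr_sumr.
by rewrite (sum_nonempty_sets_card l (fun i => (1 - lam p m ^+ i)^-1)).
Qed.

Lemma sum_exprVn (F : fieldType) (b : F) (k : nat) : b != 0 -> b != 1 ->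
  \sum_(m < k.+1) (b ^+ m)^-1 = ((b ^+ k)^-1 - b) / (1 - b).
Proof.
move=> b_neq0 b_neq1; set u := b^-1.
have u_neq1 : u - 1 != 0 by rewrite subr_eq0 invr_eq1.
have sumE : \sum_(m < k.+1) (b ^+ m)^-1 = (u ^+ k.+1 - 1) / (u - 1).
  by rewrite subrX1 mulrC mulKf //; apply: eq_bigr => m _; rewrite exprVn.
rewrite sumE /u !exprVn exprS; field.
by rewrite subr_eq0 eq_sym b_neq1 expf_neq0.
Qed.
Import numFieldNormedType.Exports.
Local Open Scope classical_set_scope.
Local Open Scope ring_scope.

Lemma eseries_telescope (R : realType) (G u : nat -> R) :
  (forall t, G t.+1 = G t - u t) -> G @ \oo --> 0 ->
  (\sum_(t <oo) (u t)%:E)%E = (G 0%N)%:E.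
Proof.
move=> G_step G_cvg0.
have partialE N : \sum_(0 <= t < N) u t = G 0%N - G N.
  elim: N => [|N IH]; first by rewrite big_geq // subrr.
  by rewrite big_nat_recr //= IH G_step; ring.
have -> : (fun N => \sum_(0 <= t < N) (u t)%:E)%E = EFin \o (fun N => G 0%N - G N).
  by apply/funext => N /=; rewrite sumEFin partialE.
have cvgG : (fun N => G 0%N - G N) @ \oo --> G 0%N - 0 by apply: cvgB => //; exact: cvg_cst.
rewrite subr0 in cvgG.
by rewrite EFin_lim ?(cvg_lim _ cvgG) //; apply/cvg_ex; exists (G 0%N).
Qed.

Lemma geometric_decay_cvg0 (R : realType) (G u : nat -> R) (B : R) :
  1 <= B -> (forall t, 0 <= G t) -> (forall t, G t <= B * u t) ->
  (forall t, G t.+1 = G t - u t) -> G @ \oo --> 0.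
Proof.
move=> B_ge1 G_ge0 G_le G_step; set r := 1 - B^-1.
have B_inv_gt0 : 0 < B^-1 by rewrite invr_gt0; lra.
have r_ge0 : 0 <= r by rewrite /r subr_ge0 invf_le1 //; lra.
have G_geometric t : G t <= G 0%N * r ^+ t.
  elim: t => [|t IH]; first by rewrite expr0 mulr1.
  have u_ge : G t / B <= u t by rewrite ler_pdivrMr; [rewrite mulrC | lra].
  rewrite G_step exprS mulrCA; apply: le_trans (_ : r * G t <= _); last exact: ler_wpM2l.
  by rewrite /r; lra.
apply: (squeeze_cvgr (f := fun _ => 0) (h := geometric (G 0%N) r)).
- by apply: nearW => t; rewrite G_ge0 G_geometric.
- exact: (cvg_cst (0 : R^o)).
- by apply: cvg_geometric; rewrite ger0_norm // /r; lra.
Qed.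

Lemma expected_runtime_total_coef (R : realType) (n l : nat) (p : nat -> R) :
  (0 < n)%N -> (0 < l)%N -> (l %| n)%N -> (forall m, (m < n %/ l)%N -> 0 < p m < 1) ->
  expected_runtime n l p = (total_coef n l p)%:E.
Proof.
move=> n_gt0 l_gt0 l_dvd_n p01; rewrite -(potential_mass0 p n_gt0 l_dvd_n).
have mass_step := potential_mass_step n_gt0 l_gt0 l_dvd_n p01.
apply: eseries_telescope => //.
apply: (geometric_decay_cvg0 (B := 2 * total_coef n l p + 1) (u := surv n l p)) => //.
- by have := total_coef_ge0 p01; lra.
- exact: potential_mass_ge0.
- move=> t; apply: le_trans (potential_mass_le n_gt0 p01 t) _.
  rewrite ler_wpM2r ?lerDl //; apply: sumr_ge0 => x _; exact: alive_ge0.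
Qed.

Theorem mainTheorem6 (R : realType) (n l : nat) :
  (0 < n)%N -> (0 < l)%N -> (l %| n)%N ->
  (forall p : nat -> R,
    (forall m, (m < n %/ l)%N -> 0 < p m < 1) ->
    expected_runtime n l p =
      (\sum_(m < n %/ l)
         ((1 - p m) ^+ (m * l))^-1 *
         \sum_(1 <= j < l.+1) 'C(l, j)%:R / (1 - (1 - 2 * p m) ^+ j))%:E)
  /\
  (forall p : R, 0 < p < 1 ->
    expected_runtime n l (fun _ => p) =
      ((((1 - p) ^+ (n - l))^-1 - (1 - p) ^+ l) / (1 - (1 - p) ^+ l) *
         \sum_(1 <= j < l.+1) 'C(l, j)%:R / (1 - (1 - 2 * p) ^+ j))%:E).
Proof.
move=> n_gt0 l_gt0 l_dvd_n; split=> [p p01|p p01].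
  by rewrite expected_runtime_total_coef // total_coefE.
rewrite expected_runtime_total_coef // total_coefE -mulr_suml; congr (_ * _)%:E.
have [k nE] : exists k, (n %/ l)%N = k.+1.
  by exists (n %/ l).-1; rewrite prednK // divn_gt0 // dvdn_leq.
have -> : (n - l)%N = (k * l)%N by rewrite -(divnK l_dvd_n) nE mulSnr addnK.
have [p_gt0 p_lt1] := andP p01.
have q_ne0 : (1 - p) ^+ l != 0 by rewrite expf_neq0 // subr_eq0 eq_sym lt_eqF.
have q_ne1 : (1 - p) ^+ l != 1 by rewrite lt_eqF // expr_lt1 //; lra.
rewrite nE (mulnC k) exprM -sum_exprVn //; apply: eq_bigr => m _.
by rewrite mulnC exprM.
Qed.
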